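(* In the setting described in the context (assuming (F1) and (F2)), for every $t\in\mathbb N\cup\{0\}$, $$\|z(t)-1_n\otimes\bar w(t)\|_{\pi\otimes1_d}\le\delta\|w(t)-n\pi\otimes\bar w(t)\|_{\pi\otimes1_d}+\delta\|1_n-n\pi\|_\pi\sigma_W^t\big(\|\bar w(t)-w_*\|+\|w_*\|\big).$$
   Context: $G=(V,E)$ directed on $\{1,\dots,n\}$, self-loop at each vertex, strongly connected; $d_j=|\{i:(j,i)\in E\}|$, $W_{ij}=1/d_j$ if $(j,i)\in E$, else $0$. $\pi$: $W\pi=\pi$, $\pi_i>0$, $\sum\pi_i=1$; $W^\infty=\pi1_n^\top$. $\|x\|_\pi=(\sum_ix_i^2/\pi_i)^{1/2}$ on $\mathbb R^n$, $|||\cdot|||_\pi$ the induced operator norm, $\sigma_W=|||W-W^\infty|||_\pi$ (known $<1$). On $\mathbb R^{nd}$, $\|x\|_{\pi\otimes1_d}=(\sum_i\|x_i\|^2/\pi_i)^{1/2}$. $v\otimes u=\mathrm{col}(v_1u,\dots,v_nu)$. $f_i:\mathbb R^d\to\mathbb R$, $f=\frac1n\sum f_i$; (F1) each $\nabla f_i$ is $L_i$-Lipschitz, $L=\max L_i$; (F2) $f$ is $\beta$-strongly convex; $w_*$ is the minimizer of $f$. $\nabla F(x)=\mathrm{col}(\nabla f_i(x_i))$. Algorithm with stepsize $\alpha>0$: given $w(0)\in\mathbb R^{nd}$, $y(0)=1_n$; for $t\ge0$: $z_i(t)=w_i(t)/y_i(t)$, $x_i(t)=w_i(t)-\alpha\nabla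 f_i(z_i(t))$, $w_i(t+1)=\sum_jW_{ij}x_j(t)$, $y_i(t+1)=\sum_jW_{ij}y_j(t)$. $z(t)=\mathrm{col}(z_i(t))$, $\bar w(t)=\frac1n\sum_iw_i(t)$, $\delta=\sup_{t\ge0}\max_i1/y_i(t)$. *)

From HB Require Import structures.
From mathcomp Require Import all_boot all_order all_algebra.
From mathcomp Require Import all_classical all_reals all_analysis.
Set Implicit Arguments. Unset Strict Implicit. Unset Printing Implicit Defensive.
Import Order.TTheory GRing.Theory Num.Theory.
Import numFieldNormedType.Exports.
Local Open Scope classical_set_scope.
Local Open Scope ring_scope.

Section Defs.
Variable R : realType.

Definition dotr (d : nat) (u v : 'rV[R]_d) : R := \sum_(k < d) u 0 k * v 0 k.
Definition enorm (d : nat) (u : 'rV[R]_d) : R := Num.sqrt (dotr u u).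

(* Graph data: E j i means (j,i) \in E.  Out-degree d_j = #{i | (j,i) \in E}. *)
Definition outdeg (n : nat) (E : rel 'I_n) (j : 'I_n) : nat := #|[set i | E j i]|.
Definition mixW (n : nat) (E : rel 'I_n) : 'M[R]_n :=
  \matrix_(i, j) (if E j i then (outdeg E j)%:R^-1 else 0).

Definition Winf (n : nat) (pi : 'cV[R]_n) : 'M[R]_n := \matrix_(i, j) pi i 0.

Definition normpi (n : nat) (pi x : 'cV[R]_n) : R :=
  Num.sqrt (\sum_(i < n) x i 0 ^+ 2 / pi i 0).

Definition opnormpi (n : nat) (pi : 'cV[R]_n) (A : 'M[R]_n) : R :=
  sup [set normpi pi (A *m x) / normpi pi x | x in [set x : 'cV[R]_n | x != 0]].

(* Elements of R^{nd} = col(x_1,...,x_n), x_i in R^d, stored as n x d matrices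
   whose i-th row is x_i. ||x||_{pi (x) 1_d} = (sum_i ||x_i||^2/pi_i)^{1/2}. *)
Definition normpid (n d : nat) (pi : 'cV[R]_n) (X : 'M[R]_(n, d)) : R :=
  Num.sqrt (\sum_(i < n) enorm (row i X) ^+ 2 / pi i 0).

Definition kron (n d : nat) (v : 'cV[R]_n) (u : 'rV[R]_d) : 'M[R]_(n, d) :=
  \matrix_(i, k) (v i 0 * u 0 k).

Definition ones (n : nat) : 'cV[R]_n := \col_(i < n) 1.

Definition favg (n d : nat) (f : 'I_n -> 'rV[R]_d -> R) (x : 'rV[R]_d) : R :=
  n%:R^-1 * \sum_(i < n) f i x.

Definition strongly_convex (d : nat) (beta : R) (f : 'rV[R]_d -> R) : Prop :=
  0 < beta /\
  forall (x y : 'rV[R]_d) (lam : R), 0 <= lam <= 1 ->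
    f (lam *: x + (1 - lam) *: y) <=
      lam * f x + (1 - lam) * f y
      - beta / 2 * lam * (1 - lam) * enorm (x - y) ^+ 2.

Definition is_gradient (d : nat) (f : 'rV[R]_d -> R) (g : 'rV[R]_d -> 'rV[R]_d) : Prop :=
  forall x, differentiable f x /\ forall v, 'd f x v = dotr (g x) v.

Definition zof (n d : nat) (w : 'M[R]_(n, d)) (y : 'cV[R]_n) : 'M[R]_(n, d) :=
  \matrix_(i, k) (w i k / y i 0).

Fixpoint alg_state (n d : nat) (W : 'M[R]_n) (g : 'I_n -> 'rV[R]_d -> 'rV[R]_d)
    (alpha : R) (w0 : 'M[R]_(n, d)) (t : nat) : 'M[R]_(n, d) * 'cV[R]_n :=
  match t with
  | 0 => (w0, ones n)
  | t'.+1 =>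
      let s := alg_state W g alpha w0 t' in
      let z := zof s.1 s.2 in
      let x := s.1 - alpha *: (\matrix_(i, k) (g i (row i z) 0 k)) in
      (W *m x, W *m s.2)
  end.

Definition wbar (n d : nat) (w : 'M[R]_(n, d)) : 'rV[R]_d :=
  n%:R^-1 *: \sum_(i < n) row i w.

End Defs.

From HB Require Import structures.
From mathcomp Require Import all_boot all_order all_algebra.
From mathcomp Require Import all_classical all_reals all_analysis.
From mathcomp Require Import ring lra.
Import Order.TTheory GRing.Theory Num.Theory.
Import numFieldNormedType.Exports.
Set Implicit Arguments. Unset Strict Implicit. Unset Printing Implicit Defensive.
Local Open Scope ring_scope.

(* Write D = diag(y(t)).  Then z - 1 (x) wbar = D^-1 (w - n pi (x) wbar)
   - D^-1 (y - n pi) (x) wbar, and every 1/y_i is at most delta.  The push-sum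
   weights y(t+1) = W y(t) stay positive and sum to n; as W pi = pi and W^oo
   annihilates every vector with zero sum, y(t+1) - n pi = (W - W^oo)(y(t) - n pi),
   whence ||y(t) - n pi||_pi <= sigma_W^t ||1 - n pi||_pi.  It remains to bound
   ||wbar|| by ||wbar - w_*|| + ||w_*||. *)

Section WeightedNorm.
Variables (R : rcfType) (I : finType) (c : I -> R).
Hypothesis c_ge0 : forall i, 0 <= c i.

Definition wnorm (u : I -> R) : R := Num.sqrt (\sum_i c i * u i ^+ 2).

Lemma eq_wnorm u v : u =1 v -> wnorm u = wnorm v.
Proof. by move=> uv; rewrite /wnorm; under eq_bigr do rewrite uv. Qed.

Lemma wsum_sqr_ge0 u : 0 <= \sum_i c i * u i ^+ 2.
Proof. by apply: sumr_ge0 => i _; rewrite mulr_ge0 ?c_ge0 ?sqr_ge0. Qed.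

Lemma cauchy_schwarz_wsum (a b : I -> R) :
  (\sum_i c i * a i * b i) ^+ 2
    <= (\sum_i c i * a i ^+ 2) * (\sum_i c i * b i ^+ 2).
Proof.
set A := \sum_i c i * a i ^+ 2; set B := \sum_i c i * b i ^+ 2.
set C := \sum_i c i * a i * b i.
have lagrange : \sum_i \sum_j c i * c j * (a i * b j - a j * b i) ^+ 2
                = 2 * (A * B - C ^+ 2).
  transitivity (\sum_i \sum_j (c i * a i ^+ 2 * (c j * b j ^+ 2)
      + c j * a j ^+ 2 * (c i * b i ^+ 2) - 2 * (c i * a i * b i) * (c j * a j * b j))).
    by apply: eq_bigr => i _; apply: eq_bigr => j _; ring.
  under eq_bigr do rewrite sumrB big_split /= -!mulr_sumr -mulr_suml.
  by rewrite sumrB big_split /= -!mulr_suml -!mulr_sumr -/A -/B -/C; ring.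
have : 0 <= 2 * (A * B - C ^+ 2).
  rewrite -lagrange; apply: sumr_ge0 => i _; apply: sumr_ge0 => j _.
  by apply: mulr_ge0; [exact: mulr_ge0 | exact: sqr_ge0].
by rewrite pmulr_rge0 // subr_ge0.
Qed.

Lemma ler_wnormD u v : wnorm (fun i => u i + v i) <= wnorm u + wnorm v.
Proof.
have [Age0 Bge0] := (wsum_sqr_ge0 u, wsum_sqr_ge0 v).
rewrite /wnorm -[_ + _]ger0_norm ?addr_ge0 ?sqrtr_ge0 // -sqrtr_sqr.
apply: ler_wsqrtr.
set A := \sum_i c i * u i ^+ 2; set B := \sum_i c i * v i ^+ 2.
set C := \sum_i c i * u i * v i.
have expand : \sum_i c i * (u i + v i) ^+ 2 = A + 2 * C + B.
  rewrite /A /B /C mulr_sumr -!big_split /=.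
  by apply: eq_bigr => i _; ring.
have C_le : C <= Num.sqrt A * Num.sqrt B.
  apply: le_trans (ler_norm C) _; rewrite -sqrtr_sqr -sqrtrM //.
  exact/ler_wsqrtr/cauchy_schwarz_wsum.
rewrite expand.
have -> : (Num.sqrt A + Num.sqrt B) ^+ 2
          = Num.sqrt A ^+ 2 + 2 * (Num.sqrt A * Num.sqrt B) + Num.sqrt B ^+ 2 by ring.
rewrite !sqr_sqrtr //; lra.
Qed.

Lemma wnorm_mul_le (s u : I -> R) (e : R) :
  0 <= e -> (forall i, `|s i| <= e) -> wnorm (fun i => s i * u i) <= e * wnorm u.
Proof.
move=> e_ge0 s_le; rewrite /wnorm -[e]ger0_norm // -sqrtr_sqr -sqrtrM ?sqr_ge0 //.
apply: ler_wsqrtr; rewrite mulr_sumr; apply: ler_sum => i _.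
rewrite exprMn mulrCA; apply: ler_wpM2r; first by rewrite mulr_ge0 ?c_ge0 ?sqr_ge0.
rewrite -real_normK ?num_real //.
by rewrite ler_sqr ?nnegrE // (le_trans _ (s_le i)).
Qed.

End WeightedNorm.

Lemma wnorm_tensor (R : rcfType) (I J : finType) (c u : I -> R) (v : J -> R) :
  (forall i, 0 <= c i) ->
  wnorm (fun p : I * J => c p.1) (fun p => u p.1 * v p.2)
    = wnorm c u * wnorm (fun=> 1) v.
Proof.
move=> c_ge0; rewrite /wnorm -sqrtrM ?wsum_sqr_ge0 //; congr Num.sqrt.
rewrite -(pair_bigA _ (fun i j => c i * (u i * v j) ^+ 2)) /= mulr_suml.
by apply: eq_bigr => i _; rewrite mulr_sumr; apply: eq_bigr => j _; ring.
Qed.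

Lemma enormE (R : realType) (d : nat) (u : 'rV[R]_d) :
  enorm u = wnorm (fun=> 1) (fun k => u 0 k).
Proof.
rewrite /enorm /wnorm /dotr; congr Num.sqrt.
by apply: eq_bigr => k _; rewrite mul1r expr2.
Qed.

Lemma ler_enormD (R : realType) (d : nat) (u v : 'rV[R]_d) :
  enorm (u + v) <= enorm u + enorm v.
Proof.
rewrite !enormE (@eq_wnorm _ _ _ _ (fun k => u 0 k + v 0 k)) => [|k]; last by rewrite mxE.
exact: ler_wnormD.
Qed.

Section PiNorms.
Variables (R : realType) (n : nat) (pi : 'cV[R]_n).
Hypothesis pi_gt0 : forall i, 0 < pi i 0.

Let invpi_ge0 i : 0 <= (pi i 0)^-1.
Proof. by rewrite invr_ge0 ltW. Qed.

Lemma normpiE x : normpi pi x = wnorm (fun i => (pi i 0)^-1) (fun i => x i 0).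
Proof. by rewrite /normpi /wnorm; under eq_bigr do rewrite mulrC. Qed.

Lemma normpidE d (X : 'M[R]_(n, d)) :
  normpid pi X = wnorm (fun p : 'I_n * 'I_d => (pi p.1 0)^-1) (fun p => X p.1 p.2).
Proof.
rewrite /normpid /wnorm -(pair_bigA _ (fun i k => (pi i 0)^-1 * X i k ^+ 2)) /=.
congr Num.sqrt; apply: eq_bigr => i _.
rewrite /enorm sqr_sqrtr; last by apply: sumr_ge0 => k _; rewrite -expr2 sqr_ge0.
by rewrite mulrC mulr_sumr; apply: eq_bigr => k _; rewrite !mxE expr2.
Qed.

Lemma normpi0 : normpi pi 0 = 0.
Proof. by rewrite /normpi big1 ?sqrtr0 // => i _; rewrite mxE expr0n mul0r. Qed.

Lemma normpi_mulmx_bounded (A : 'M[R]_n) :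
  exists2 K, 0 <= K & forall x, normpi pi (A *m x) <= K * normpi pi x.
Proof.
pose K2 := \sum_i (pi i 0)^-1 * \sum_j (pi j 0)^-1 * (A i j * pi j 0) ^+ 2.
have K2_ge0 : 0 <= K2.
  by apply: sumr_ge0 => i _; rewrite mulr_ge0 ?wsum_sqr_ge0.
exists (Num.sqrt K2) => [|x]; first exact: sqrtr_ge0.
rewrite !normpiE /wnorm -sqrtrM //; apply: ler_wsqrtr.
rewrite mulr_suml; apply: ler_sum => i _; rewrite -mulrA ler_wpM2l //.
have -> : (A *m x) i 0 = \sum_j (pi j 0)^-1 * (A i j * pi j 0) * x j 0.
  by rewrite mxE; apply: eq_bigr => j _; rewrite mulrCA mulVf ?mulr1 ?gt_eqF.
exact: cauchy_schwarz_wsum.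
Qed.

Let normpi_gt0 x : normpi pi x != 0 -> 0 < normpi pi x.
Proof. by rewrite lt_neqAle eq_sym => ->; exact: sqrtr_ge0. Qed.

(* [sup] of an unbounded set is a junk value, so [opnormpi] is only usable
   once the quotients are known to be bounded. *)
Let opnormpi_ratios_bounded (A : 'M[R]_n) :
  has_ubound [set normpi pi (A *m x) / normpi pi x | x in [set x | x != 0]].
Proof.
have [K K_ge0 AK] := normpi_mulmx_bounded A.
exists K => _ [x _ <-]; have [->|/normpi_gt0 nx_gt0] := eqVneq (normpi pi x) 0.
  by rewrite invr0 mulr0.
by rewrite ler_pdivrMr.
Qed.

Lemma opnormpi_ge0 (A : 'M[R]_n) : (0 < n)%N -> 0 <= opnormpi pi A.
Proof.
move=> n_gt0; have ones_neq0 : ones R n != 0.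
  by apply/eqP => /matrixP /(_ (Ordinal n_gt0) 0); rewrite !mxE; apply/eqP/oner_neq0.
have := ub_le_sup (opnormpi_ratios_bounded A) (ex_intro2 _ _ (ones R n) ones_neq0 erefl).
by apply: le_trans; rewrite divr_ge0 ?sqrtr_ge0.
Qed.

Lemma normpi_mulmx_le (A : 'M[R]_n) x :
  normpi pi (A *m x) <= opnormpi pi A * normpi pi x.
Proof.
have [nx0|/normpi_gt0 nx_gt0] := eqVneq (normpi pi x) 0.
  have [K _ AK] := normpi_mulmx_bounded A.
  by have := AK x; rewrite nx0 !mulr0.
have x_neq0 : x != 0 by apply: contra_neq (lt0r_neq0 nx_gt0) => ->; exact: normpi0.
rewrite -ler_pdivrMr //.
exact: ub_le_sup (opnormpi_ratios_bounded A) _ (ex_intro2 _ _ x x_neq0 erefl).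
Qed.

End PiNorms.

Section MixingMatrix.
Variables (R : realType) (n : nat) (E : rel 'I_n).
Hypothesis E_refl : forall i, E i i.
Local Notation W := (mixW R E).

Lemma outdeg_gt0 j : (0 < outdeg E j)%N.
Proof. by apply/card_gt0P; exists j; rewrite in_setE; exact: E_refl. Qed.

Lemma mixW_ge0 i j : 0 <= W i j.
Proof. by rewrite mxE; case: (E j i); rewrite ?invr_ge0. Qed.

Lemma mixW_diag_gt0 i : 0 < W i i.
Proof. by rewrite mxE E_refl invr_gt0 ltr0n outdeg_gt0. Qed.

Lemma sum_mixW_col j : \sum_i W i j = 1.
Proof.
under eq_bigr do rewrite mxE.
rewrite -big_mkcond sumr_const.
have -> : #|[pred i | E j i]| = outdeg E j.
  by apply: eq_card => i; apply/idP/idP; rewrite in_setE.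
by rewrite -[LHS]mulr_natr mulVf // pnatr_eq0 -lt0n outdeg_gt0.
Qed.

Lemma mixW_mul_gt0 (y : 'cV[R]_n) : (forall i, 0 < y i 0) -> forall i, 0 < (W *m y) i 0.
Proof.
move=> y_gt0 i; rewrite mxE (bigD1 i) //=.
rewrite ltr_pwDl ?mulr_gt0 ?mixW_diag_gt0 //.
by apply: sumr_ge0 => j _; rewrite mulr_ge0 ?mixW_ge0 ?ltW.
Qed.

Lemma sum_mixW_mul (y : 'cV[R]_n) : \sum_i (W *m y) i 0 = \sum_i y i 0.
Proof.
under eq_bigr do rewrite mxE.
by rewrite exchange_big; apply: eq_bigr => j _; rewrite -mulr_suml sum_mixW_col mul1r.
Qed.

End MixingMatrix.

Lemma Winf_mulmx (R : realType) (n : nat) (pi v : 'cV[R]_n) :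
  Winf pi *m v = (\sum_i v i 0) *: pi.
Proof.
apply/matrixP => i j; rewrite (ord1 j) !mxE mulr_suml.
by apply: eq_bigr => k _; rewrite mxE mulrC.
Qed.

Section PushSumWeights.
Variables (R : realType) (n d : nat) (E : rel 'I_n) (pi : 'cV[R]_n).
Variables (g : 'I_n -> 'rV[R]_d -> 'rV[R]_d) (alpha : R) (w0 : 'M[R]_(n, d)).
Hypotheses (E_refl : forall i, E i i) (W_pi : mixW R E *m pi = pi).
Hypothesis pi_sum : \sum_i pi i 0 = 1.
Local Notation W := (mixW R E).
Local Notation y t := (alg_state W g alpha w0 t).2.

Lemma alg_state_y_gt0 t i : 0 < y t i 0.
Proof.
elim: t i => [|t IH] i /=; first by rewrite mxE ltr01.
exact: mixW_mul_gt0.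
Qed.

Lemma sum_alg_state_y t : \sum_i y t i 0 = n%:R.
Proof.
elim: t => [|t IH] /=; last by rewrite sum_mixW_mul.
by under eq_bigr do rewrite mxE; rewrite sumr_const card_ord.
Qed.

Lemma alg_state_y_devS t :
  y t.+1 - n%:R *: pi = (W - Winf pi) *m (y t - n%:R *: pi).
Proof.
have dev_sum0 : \sum_i (y t - n%:R *: pi) i 0 = 0.
  under eq_bigr do rewrite !mxE.
  by rewrite sumrB -mulr_sumr sum_alg_state_y pi_sum mulr1 subrr.
by rewrite mulmxBl Winf_mulmx dev_sum0 scale0r subr0 mulmxBr -scalemxAr W_pi.
Qed.

Lemma normpi_alg_state_y_dev_le t :
  (0 < n)%N -> (forall i, 0 < pi i 0) ->
  normpi pi (y t - n%:R *: pi)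
    <= opnormpi pi (W - Winf pi) ^+ t * normpi pi (ones R n - n%:R *: pi).
Proof.
move=> n_gt0 pi_gt0; elim: t => [|t IH]; first by rewrite expr0 mul1r.
rewrite alg_state_y_devS exprS -mulrA.
apply: le_trans (normpi_mulmx_le pi_gt0 _ _) _.
by rewrite ler_wpM2l ?opnormpi_ge0.
Qed.

End PushSumWeights.

Lemma normpid_zof_sub_kron_le (R : realType) (n d : nat) (pi : 'cV[R]_n)
    (w : 'M[R]_(n, d)) (y p : 'cV[R]_n) (u : 'rV[R]_d) (delta : R) :
  (forall i, 0 < pi i 0) -> (forall i, 0 < y i 0) ->
  0 <= delta -> (forall i, (y i 0)^-1 <= delta) ->
  normpid pi (zof w y - kron (ones R n) u)
    <= delta * normpid pi (w - kron p u) + delta * normpi pi (y - p) * enorm u.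
Proof.
move=> pi_gt0 y_gt0 delta_ge0 y_inv_le.
have invpi_ge0 i : 0 <= (pi i 0)^-1 by rewrite invr_ge0 ltW.
pose s i := (y i 0)^-1.
have s_norm_le i : `|s i| <= delta.
  by rewrite ger0_norm ?y_inv_le // invr_ge0 ltW.
pose U i := - s i * (y - p) i 0.
have zof_entry (q : 'I_n * 'I_d) : (zof w y - kron (ones R n) u) q.1 q.2
    = s q.1 * (w - kron p u) q.1 q.2 + U q.1 * u 0 q.2.
  by rewrite /U /s !mxE; field; exact: lt0r_neq0 (y_gt0 _).
rewrite normpidE (eq_wnorm _ zof_entry).
apply: le_trans (ler_wnormD (fun q => invpi_ge0 q.1) _ _) _.
apply: lerD; first by rewrite normpidE; exact: wnorm_mul_le.
rewrite (wnorm_tensor U (fun k => u 0 k) invpi_ge0) -enormE.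
rewrite ler_wpM2r ?sqrtr_ge0 // normpiE.
by apply: wnorm_mul_le => // i; rewrite normrN.
Qed.

Theorem lemma5p1 (R : realType) (n d : nat) (E : rel 'I_n)
  (pi : 'cV[R]_n)
  (f : 'I_n -> 'rV[R]_d -> R) (g : 'I_n -> 'rV[R]_d -> 'rV[R]_d)
  (Ls : 'I_n -> R) (beta : R) (wstar : 'rV[R]_d)
  (alpha : R) (w0 : 'M[R]_(n, d)) (delta : R) :
  (0 < n)%N ->
  (* self-loop at each vertex, strongly connected *)
  (forall i, E i i) ->
  (forall i j, connect E i j) ->
  (* pi : W pi = pi, pi_i > 0, sum pi_i = 1 *)
  mixW R E *m pi = pi ->
  (forall i, 0 < pi i 0) ->
  \sum_(i < n) pi i 0 = 1 ->
  (* g i is the gradient of f i *)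
  (forall i, is_gradient (f i) (g i)) ->
  (* (F1) *)
  (forall i x y, enorm (g i x - g i y) <= Ls i * enorm (x - y)) ->
  (* (F2) *)
  strongly_convex beta (favg f) ->
  (* w_* is the minimizer of f *)
  (forall x, favg f wstar <= favg f x) ->
  0 < alpha ->
  (* delta = sup_{t >= 0} max_i 1 / y_i(t) *)
  (forall t i, ((alg_state (mixW R E) g alpha w0 t).2 i 0)^-1 <= delta) ->
  (forall b, (forall t i, ((alg_state (mixW R E) g alpha w0 t).2 i 0)^-1 <= b) ->
     delta <= b) ->
  forall t : nat,
  let W := mixW R E in
  let w := (alg_state W g alpha w0 t).1 in
  let y := (alg_state W g alpha w0 t).2 in
  let z := zof w y in
  let sigmaW := opnormpi pi (W - Winf pi) in
  normpid pi (z - kron (ones R n) (wbar w))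
  <= delta * normpid pi (w - kron (n%:R *: pi) (wbar w))
     + delta * normpi pi (ones R n - n%:R *: pi) * sigmaW ^+ t
       * (enorm (wbar w - wstar) + enorm wstar).
Proof.
move=> n_gt0 E_refl _ W_pi pi_gt0 pi_sum _ _ _ _ _ delta_ub _ t; cbv zeta.
have y_gt0 := alg_state_y_gt0 g alpha w0 E_refl t.
have delta_ge0 : 0 <= delta.
  by apply: le_trans (delta_ub t (Ordinal n_gt0)); rewrite invr_ge0 ltW.
apply: le_trans (normpid_zof_sub_kron_le _ (n%:R *: pi) _
                   pi_gt0 y_gt0 delta_ge0 (delta_ub t)) _.
rewrite lerD2l -!mulrA ler_wpM2l // mulrA [_ * _ ^+ t]mulrC.
apply: ler_pM; rewrite ?sqrtr_ge0 //.
  exact: normpi_alg_state_y_dev_le.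
by rewrite -[X in enorm X <= _](subrK wstar) ler_enormD.
Qed.
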